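(* Fix $k\ge1$ and $\ell\ge1$. For every integer $j$ with $1+F_{2\ell+1}\le j\le F_{2\ell+3}-1$, $$q(j+1)-q(j)=q(j-F_{2\ell+1}+1)-q(j-F_{2\ell+1}).$$
   Context: Fibonacci numbers: $F_1=F_2=1$, $F_{n+1}=F_n+F_{n-1}$ for $n\ge2$. Chung–Graham decomposition: every positive integer $n$ has a unique representation $n=\sum_{i\ge1}c_iF_{2i}$ with $c_i\in\{0,1,2\}$, only finitely many nonzero, such that whenever $c_i=c_j=2$ with $i<j$ there is $k$ with $i<k<j$ and $c_k=0$. Let $\mathcal{CG}(n)$ be the set of $F_{2i}$ with $c_i\neq0$. For $k\ge1$, $A_{2k}=\{n\ge1:\min\mathcal{CG}(n)=F_{2k}\}$, and $q(1)<q(2)<q(3)<\cdots$ denote the elements of $A_{2k}$ listed in increasing order. *)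

From mathcomp Require Import all_boot.
Set Implicit Arguments. Unset Strict Implicit. Unset Printing Implicit Defensive.

Fixpoint F (n : nat) : nat :=
  match n with
  | 0 => 0
  | 1 => 1
  | (m.+1 as p).+1 => F p + F m
  end.

(* [CGrep c n]: the digit function c (c i is the coefficient of F_{2i}, i >= 1;
   c 0 is forced to be 0) is a Chung--Graham decomposition of n. *)
Definition CGrep (c : nat -> nat) (n : nat) : Prop :=
  c 0 = 0 /\
  (forall i, c i <= 2) /\
  (exists N, (forall i, N < i -> c i = 0) /\
             n = \sum_(1 <= i < N.+1) c i * F (2 * i)) /\
  (forall i j, 1 <= i -> i < j -> c i = 2 -> c j = 2 ->
     exists m, i < m /\ m < j /\ c m = 0).

Definition A2k (k n : nat) : Prop :=
  1 <= n /\
  exists c, CGrep c n /\ 1 <= k /\ c k <> 0 /\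
    (forall i, 1 <= i -> c i <> 0 -> F (2 * k) <= F (2 * i)).

From mathcomp Require Import all_boot zify.

(* Let X = F_{2m+2} with m >= k.  Putting a top digit 1 or 2 at index m+1 on a
   Chung-Graham digit string of value x < X (with x < F_{2m+1} for the digit 2,
   which is what the separation condition between the 2s demands) gives again
   such a string, and every element of A_{2k} below F_{2m+4} arises this way.
   Hence A_{2k} is invariant under translation by X on the window
   [0, F_{2m+3}), so the enumeration q shifts by X there, and counting shows
   that exactly F_{n+1} elements of A_{2k} lie below F_{2k+n}.  For n = 2l this
   gives q(F_{2l+1} + i) = F_{2(k+l)} + q(i) for 1 <= i <= F_{2l+2}, from which
   the identity between consecutive differences is immediate. *)

Lemma FSS n : F n.+2 = F n.+1 + F n. Proof. by []. Qed.

Lemma F_gt0 n : 0 < F n.+1.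
Proof. by elim: n => // n IH; rewrite FSS addn_gt0 IH. Qed.

Lemma leq_F : {homo F : m n / m <= n}.
Proof.
apply: homo_leq => [//|n m p|]; first exact: leq_trans.
by case=> // n; rewrite FSS leq_addr.
Qed.

Lemma ltn_F_double i j : i < j -> F (2 * i) < F (2 * j).
Proof.
move=> ij; have := F_gt0 (2 * i).
have : F (2 * i).+2 <= F (2 * j) by apply: leq_F; lia.
rewrite FSS; lia.
Qed.

Definition cgsum (c : nat -> nat) (N : nat) := \sum_(1 <= i < N.+1) c i * F (2 * i).

Lemma cgsum0 c : cgsum c 0 = 0. Proof. by rewrite /cgsum big_geq. Qed.

Lemma cgsumS c N : cgsum c N.+1 = cgsum c N + c N.+1 * F (2 * N).+2.
Proof. by rewrite /cgsum big_nat_recr // mulnS add2n. Qed.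

Lemma eq_cgsum c d N : (forall i, 0 < i <= N -> c i = d i) -> cgsum c N = cgsum d N.
Proof. by move=> cd; apply: eq_big_nat => i /cd ->. Qed.

Lemma cgsum_eq0 c N : (forall i, 0 < i <= N -> c i = 0) -> cgsum c N = 0.
Proof.
move=> c0; rewrite (@eq_cgsum c (fun=> 0)) // /cgsum.
by elim: N {c0} => [|N IH]; [rewrite big_geq | rewrite big_nat_recr //= IH].
Qed.

Lemma leq_cgsum c N p : 0 < p <= N -> c p * F (2 * p) <= cgsum c N.
Proof.
case/andP=> p_gt0 pN; rewrite /cgsum (@big_cat_nat _ _ _ p) //=; last lia.
by rewrite [X in _ + X]big_ltn //= addnCA leq_addr.
Qed.

Definition vanish_above (c : nat -> nat) (N : nat) := forall i, N < i -> c i = 0.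

Lemma cgsum_vanish c N M : vanish_above c N -> N <= M -> cgsum c M = cgsum c N.
Proof.
move=> van /subnKC <-; elim: (M - N) => [|d IH]; first by rewrite addn0.
by rewrite addnS cgsumS IH van ?muln0 ?addn0 //; lia.
Qed.

Definition cg_digits (c : nat -> nat) :=
  (forall i, c i <= 2) /\
  (forall i j, 0 < i -> i < j -> c i = 2 -> c j = 2 ->
     exists m, i < m /\ m < j /\ c m = 0).

Definition twos_closed (c : nat -> nat) (m : nat) :=
  forall i, 0 < i <= m -> c i = 2 -> exists2 p, i < p <= m & c p = 0.

Lemma cgsum_bounds c m : cg_digits c ->
  cgsum c m < F (2 * m).+2 /\ (twos_closed c m -> cgsum c m < F (2 * m).+1).
Proof.
case=> le2 sep; elim: m => [|m [IHlt IHclosed]]; first by rewrite cgsum0.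
have := FSS (2 * m).+2; have := FSS (2 * m).+1; have := FSS (2 * m).
rewrite cgsumS mulnS add2n.
case cm: (c m.+1) (le2 m.+1) => [|[|[|//]]] _ F2 F3 F4.
- by split=> [|_]; lia.
- split=> [|closed]; first lia.
  suff : cgsum c m < F (2 * m).+1 by lia.
  apply: IHclosed => i /andP[i_gt0 im] ci.
  have [p /andP[ip pm] cp] := closed i ltac:(lia) ci.
  have : p != m.+1 by apply/eqP=> pm1; rewrite pm1 cm in cp.
  by exists p => //; lia.
- split=> [|/(_ m.+1) [|//|p]]; try lia.
  suff : cgsum c m < F (2 * m).+1 by lia.
  apply: IHclosed => i /andP[i_gt0 im] ci.
  have [p [ip [pm cp]]] := sep i m.+1 i_gt0 im ci cm.
  by exists p => //; apply/andP.
Qed.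

Lemma cgsum_lt c m : cg_digits c -> cgsum c m < F (2 * m).+2.
Proof. by move=> /(@cgsum_bounds c m) []. Qed.

Lemma twos_closed_of_lt c m : cgsum c m < F (2 * m).+1 -> twos_closed c m.
Proof.
elim: m => [|m IH] c_lt i /andP[i_gt0 im] ci; first lia.
have := FSS (2 * m).+1; have := FSS (2 * m).
move: c_lt; rewrite cgsumS mulnS add2n => c_lt F2 F3.
case: (ltnP i m.+1) => [i_le_m | i_eq]; last first.
  have i_m : i = m.+1 by lia.
  by rewrite i_m in ci; rewrite ci in c_lt; exfalso; lia.
case: (ltnP (cgsum c m) (F (2 * m).+1)) => [small | big].
  by have [p /andP[ip pm] cp] := IH small i ltac:(lia) ci; exists p; lia.
exists m.+1; first lia.
case: (posnP (c m.+1)) => // cm_gt0.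
have := leq_pmull (F (2 * m).+2) cm_gt0; lia.
Qed.

Definition set_digit (c : nat -> nat) (p d : nat) (i : nat) := if i == p then d else c i.

Lemma cgsum_set_digit c p d N : N < p -> cgsum (set_digit c p d) N = cgsum c N.
Proof. by move=> Np; apply: eq_cgsum => i iN; rewrite /set_digit ifN_eq //; lia. Qed.

Lemma cgsum_push c m d : cgsum (set_digit c m.+1 d) m.+1 = cgsum c m + d * F (2 * m).+2.
Proof. by rewrite cgsumS cgsum_set_digit // /set_digit eqxx. Qed.

Lemma cg_digits_set0 c p : cg_digits c -> cg_digits (set_digit c p 0).
Proof.
rewrite /set_digit; case=> le2 sep; split=> [i | i j i_gt0 ij]; first by case: eqP.
case: eqP => // _ ci; case: eqP => // _ cj.
have [m [im [mj cm]]] := sep i j i_gt0 ij ci cj.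
by exists m; do !split => //; case: eqP.
Qed.

Lemma cg_digits_push c m d : cg_digits c -> vanish_above c m -> d <= 2 ->
  (d = 2 -> twos_closed c m) -> cg_digits (set_digit c m.+1 d).
Proof.
rewrite /set_digit; case=> le2 sep van d_le2 closed.
split=> [i | i j i_gt0 ij]; first by case: eqP.
case: (i =P m.+1) => [im1 _ | _ ci]; first by subst i; rewrite ifN_eq ?van //; lia.
have im : i <= m by case: (leqP i m) => // /van; rewrite ci.
case: (j =P m.+1) => [jm d2 | _ cj].
  have [p /andP[ip pm] cp] := closed d2 i ltac:(lia) ci.
  by exists p; do !split; try lia; rewrite ifN_eq //; lia.
have [p [ip [pj cp]]] := sep i j i_gt0 ij ci cj.
have jm : j <= m by case: (leqP j m) => // /van; rewrite cj.
by exists p; do !split; try lia; rewrite ifN_eq //; lia.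
Qed.

Definition cg_repr (k : nat) (c : nat -> nat) (N n : nat) :=
  [/\ cg_digits c, vanish_above c N, n = cgsum c N, c k <> 0
    & forall i, i < k -> c i = 0].

Definition inA2k (k n : nat) := exists c N, cg_repr k c N n.

Lemma A2kE k n : 0 < k -> A2k k n <-> inA2k k n.
Proof.
move=> k_gt0; split.
- case=> _ [c [[c0 [le2 [[N [van ->]] sep]]] [_ [ck minF]]]].
  exists c, N; split=> // -[//|i] ik.
  case: (posnP (c i.+1)) => // ci_gt0.
  have := minF i.+1 isT ltac:(lia); have := ltn_F_double _ _ ik; lia.
- case=> c [N [[le2 sep] van -> ck min]].
  have kN : k <= N by case: (leqP k N) => // /van.
  have := leq_cgsum c N k ltac:(lia); have := ltn_F_double _ _ k_gt0.
  rewrite muln0 /= => F2k_gt0 c_le.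
  split; first nia.
  exists c; do !split => //; first exact: min; first by exists N.
  move=> i _ ci; apply: leq_F; rewrite leq_pmul2l //.
  by case: (leqP k i) => // /min.
Qed.

Lemma inA2k_support k m n : inA2k k n -> n < F (2 * m).+2 -> exists c, cg_repr k c m n.
Proof.
case=> c [N [dig van -> ck min]] n_lt.
have van_m : vanish_above c m.
  move=> i mi; case: (leqP i N) => [iN | /van //].
  case: (posnP (c i)) => // ci_gt0; exfalso.
  have := leq_cgsum c N i ltac:(lia); have := leq_F (2 * m).+2 (2 * i) ltac:(lia).
  nia.
exists c; split=> //; case: (leqP N m) => [Nm | mN].
- by rewrite (cgsum_vanish _ _ _ van Nm).
- by rewrite (cgsum_vanish _ _ _ van_m (ltnW mN)).
Qed.

Lemma inA2k_top k m d x : k <= m -> 0 < d <= 2 -> x < F (2 * m).+2 ->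
  (d = 2 -> x < F (2 * m).+1) -> inA2k k (d * F (2 * m).+2 + x) <-> inA2k k x.
Proof.
move=> km d_bnd x_lt x_lt2.
have := FSS (2 * m).+2; have := FSS (2 * m).+1; have := FSS (2 * m) => F2 F3 F4.
split.
- move=> inA; have n_lt : d * F (2 * m).+2 + x < F (2 * m.+1).+2.
    by rewrite mulnS add2n; case/andP: d_bnd; case: {inA}d x_lt2 => [|[|[|]]] //; lia.
  have [c [dig van x_eq ck min]] := inA2k_support k m.+1 _ inA n_lt.
  rewrite cgsumS in x_eq.
  have low_eq : cgsum c m = x.
    have := cgsum_lt c m dig; have := dig.1 m.+1; case/andP: d_bnd.
    by case: d {x_lt2 inA n_lt} x_eq => [|[|[|]]] //; case: (c m.+1) => [|[|[|]]] //; lia.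
  exists (set_digit c m.+1 0), m; split.
  + exact: cg_digits_set0.
  + by move=> i mi; rewrite /set_digit; case: eqP => // i_neq; apply: van; lia.
  + by rewrite cgsum_set_digit // low_eq.
  + by rewrite /set_digit ifN_eq //; lia.
  + by move=> i ik; rewrite /set_digit ifN_eq ?min //; lia.
- move=> /(inA2k_support k m) /(_ x_lt) [c [dig van x_eq ck min]]; subst x.
  exists (set_digit c m.+1 d), m.+1; split.
  + apply: cg_digits_push => //; first by case/andP: d_bnd.
    by move=> /x_lt2; apply: twos_closed_of_lt.
  + by move=> i mi; rewrite /set_digit ifN_eq ?van //; lia.
  + by rewrite cgsum_push addnC.
  + by rewrite /set_digit ifN_eq //; lia.
  + by move=> i ik; rewrite /set_digit ifN_eq ?min //; lia.
Qed.

Lemma inA2k_shift k m x : k <= m -> x < F (2 * m).+3 ->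
  inA2k k (F (2 * m).+2 + x) <-> inA2k k x.
Proof.
move=> km x_lt; have := FSS (2 * m).+1; have := FSS (2 * m).
case: (ltnP x (F (2 * m).+2)) => [x_lt1 | x_ge] F2 F3.
  by rewrite -[F (2 * m).+2]mul1n inA2k_top.
rewrite -(subnKC x_ge) addnA addnn -mul2n inA2k_top //; try lia.
by rewrite -[F (2 * m).+2]mul1n inA2k_top //; lia.
Qed.

Lemma inA2k_bottom k x : 0 < k -> x < F (2 * k).+2 ->
  inA2k k x <-> x = F (2 * k) \/ x = 2 * F (2 * k).
Proof.
case: k => // k _ x_lt; split.
- move=> /(inA2k_support k.+1 k.+1) /(_ x_lt) [c [[le2 _] _ -> ck min]].
  rewrite cgsumS cgsum_eq0 => [|i /andP[_ ik]]; last by apply: min; lia.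
  by rewrite mulnS add2n; case: (c k.+1) ck (le2 k.+1) => [|[|[|]]] //; lia.
- move=> x_eq; have {x_eq} [d d_bnd ->] : exists2 d, 0 < d <= 2 & x = d * F (2 * k.+1).
    by case: x_eq => ->; [exists 1 | exists 2]; rewrite ?mul1n.
  exists (set_digit (fun=> 0) k.+1 d), k.+1; split.
  + by apply: cg_digits_push => //; case/andP: d_bnd.
  + by move=> i ki; rewrite /set_digit ifN_eq //; lia.
  + by rewrite cgsum_push cgsum_eq0 // mulnS add2n.
  + by rewrite /set_digit eqxx; lia.
  + by move=> i ik; rewrite /set_digit ifN_eq //; lia.
Qed.

(* For q enumerating a set increasingly, [enum_cut q s D] says that exactly s
   of its elements lie below D. *)
Definition enum_cut (q : nat -> nat) (s D : nat) := q s < D <= q s.+1.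

Section Enumeration.

Context {P : nat -> Prop} {q : nat -> nat}.
Hypothesis q_incr : forall i j, 1 <= i -> i < j -> q i < q j.
Hypothesis q_enum : forall n, P n <-> exists j, 1 <= j /\ q j = n.

Lemma enum_leq i j : 0 < i -> i <= j -> q i <= q j.
Proof.
move=> i_gt0; rewrite leq_eqVlt => /predU1P[-> // | ij].
exact/ltnW/q_incr.
Qed.

Lemma enum_mem j : 0 < j -> P (q j).
Proof. by move=> j_gt0; apply/q_enum; exists j. Qed.

Lemma enum_succ_leq x j : P x -> (0 < j -> q j < x) -> q j.+1 <= x.
Proof.
case/q_enum=> i [i_gt0 <-] qj_lt.
case: (ltnP j i) => [ji | ij]; first exact: enum_leq.
have := qj_lt (leq_trans i_gt0 ij); have := enum_leq i j i_gt0 ij; lia.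
Qed.

Lemma enum_shift s D L W : 0 < s -> 0 < L -> enum_cut q s D -> enum_cut q L W ->
    (forall x, x < W -> P (D + x) <-> P x) ->
  (forall i, 0 < i <= L -> q (s + i) = D + q i) /\ enum_cut q (s + L) (D + W).
Proof.
move=> s_gt0 L_gt0 /andP[qs_lt D_le] /andP[qL_lt W_le] shiftP.
have unshift y : P y -> D <= y < D + W -> P (y - D).
  by move=> Py yDW; apply/shiftP; [lia | rewrite subnKC //; lia].
have shift_q i : 0 < i <= L -> q (s + i) = D + q i.
  elim: i => [//|i IH] /andP[_ iL].
  have qi_lt : q i.+1 < W by apply: leq_ltn_trans qL_lt; apply: enum_leq.
  have prev : 0 < i -> q (s + i) = D + q i by move=> i_gt0; apply: IH; lia.
  have q_up : q (s + i.+1) <= D + q i.+1.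
    rewrite addnS; apply: enum_succ_leq; first by apply/shiftP/enum_mem.
    move=> _; case: (posnP i) => [-> | i_gt0].
      by rewrite addn0; apply: leq_trans qs_lt _; rewrite leq_addr.
    by rewrite prev // ltn_add2l q_incr.
  have q_low : D <= q (s + i.+1) by apply: leq_trans D_le _; apply: enum_leq; lia.
  suff : q i.+1 <= q (s + i.+1) - D by lia.
  apply: enum_succ_leq; first by apply: unshift; [apply: enum_mem |]; lia.
  move=> /prev q_prev; have := q_incr (s + i) (s + i.+1); lia.
have q_sL : q (s + L) = D + q L by apply: shift_q; lia.
split=> //; apply/andP; split; first lia.
case: leqP => // q_lt; exfalso.
have q_next := q_incr (s + L) (s + L).+1 ltac:(lia) (ltnSn _).
have P_y : P (q (s + L).+1 - D) by apply: unshift; [apply: enum_mem |]; lia.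
have := enum_succ_leq _ L P_y; lia.
Qed.

End Enumeration.

Section EnumerationOfA2k.

Variables (k : nat) (q : nat -> nat).
Hypothesis k_gt0 : 0 < k.
Hypothesis q_incr : forall i j, 1 <= i -> i < j -> q i < q j.
Hypothesis q_enum : forall n, inA2k k n <-> exists j, 1 <= j /\ q j = n.

Definition A2k_cuts t :=
  enum_cut q (F (2 * t).+2) (F (2 * (k + t)).+1) /\
  enum_cut q (F (2 * t).+3) (F (2 * (k + t)).+2).

Lemma A2k_cuts0 : A2k_cuts 0.
Proof.
rewrite /A2k_cuts /enum_cut addn0 muln0 (_ : F 2 = 1) // (_ : F 3 = 2) //.
have [m two_k] : exists m, 2 * k = m.+2 by exists (2 * k - 2); lia.
have := FSS m.+2; have := FSS m.+1; have := FSS m; have := F_gt0 m.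
rewrite -two_k => F1_gt0 F2 F3 F4.
have bottom x : inA2k k x -> x < F (2 * k).+2 -> x = F (2 * k) \/ x = 2 * F (2 * k).
  by move=> inA x_lt; apply/inA2k_bottom.
have inA1 : inA2k k (F (2 * k)) by apply/inA2k_bottom => //; [lia | left].
have inA2 : inA2k k (2 * F (2 * k)) by apply/inA2k_bottom => //; [lia | right].
have q1 : q 1 = F (2 * k).
  have : q 1 <= F (2 * k) by apply: (enum_succ_leq q_incr q_enum _ 0 inA1).
  have := bottom (q 1) (enum_mem q_enum 1 isT); lia.
have q2 : q 2 = 2 * F (2 * k).
  have := enum_succ_leq q_incr q_enum _ 1 inA2 ltac:(lia).
  have := q_incr 1 2 isT isT; have := bottom (q 2) (enum_mem q_enum 2 isT); lia.
have q3 : F (2 * k).+2 <= q 3.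
  case: leqP => // q3_lt; have := q_incr 2 3 isT isT.
  have := bottom (q 3) (enum_mem q_enum 3 isT) q3_lt; lia.
by rewrite q1 q2; lia.
Qed.

Lemma A2k_cutsS t : A2k_cuts t ->
  (forall i, 0 < i <= F (2 * t).+4 ->
     q (F (2 * t).+3 + i) = F (2 * (k + t)).+2 + q i) /\ A2k_cuts t.+1.
Proof.
case=> cutY cutX; rewrite /A2k_cuts addnS !mulnS !add2n.
have shiftP x : x < F (2 * (k + t)).+3 ->
    inA2k k (F (2 * (k + t)).+2 + x) <-> inA2k k x.
  by apply: inA2k_shift; lia.
have [_ cutZ] := enum_shift q_incr q_enum _ _ _ _ (F_gt0 _) (F_gt0 _) cutX cutY
  (fun x x_lt => shiftP x (leq_trans x_lt (leq_F _ _ (leqW (leqnSn _))))).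
rewrite -FSS in cutZ.
have [shift_q cutW] := enum_shift q_incr q_enum _ _ _ _ (F_gt0 _) (F_gt0 _) cutX cutZ shiftP.
split=> //; split=> //.
by rewrite FSS [F (2 * (k + t)).+4]FSS addnC [F (2 * (k + t)).+3 + _]addnC.
Qed.

Lemma A2k_cuts_all t : A2k_cuts t.
Proof. by elim: t => [|t IH]; [exact: A2k_cuts0 | case: (A2k_cutsS t IH)]. Qed.

Lemma enum_A2k_shift l i : 0 < l -> 0 < i <= F (2 * l).+2 ->
  q (F (2 * l).+1 + i) = F (2 * (k + l)) + q i.
Proof.
case: l => // t _; rewrite addnS !mulnS !add2n.
by case: (A2k_cutsS t (A2k_cuts_all t)) => shift_q _; apply: shift_q.
Qed.

End EnumerationOfA2k.

Theorem proposition4p1 (k l : nat) (q : nat -> nat) :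
  1 <= k -> 1 <= l ->
  (forall i j, 1 <= i -> i < j -> q i < q j) ->
  (forall n, A2k k n <-> exists j, 1 <= j /\ q j = n) ->
  forall j, 1 + F (2 * l + 1) <= j -> j <= F (2 * l + 3) - 1 ->
    q (j + 1) - q j = q (j - F (2 * l + 1) + 1) - q (j - F (2 * l + 1)).
Proof.
move=> k_gt0 l_gt0 q_incr q_A2k j; rewrite addn1 addn3 FSS => j_lo j_hi.
have q_enum n : inA2k k n <-> exists j, 1 <= j /\ q j = n by rewrite -A2kE.
have shift := enum_A2k_shift k q k_gt0 q_incr q_enum l.
have [i -> i_bnd] : exists2 i, j = F (2 * l).+1 + i & 0 < i < F (2 * l).+2.
  by exists (j - F (2 * l).+1); lia.
by rewrite addKn -addnA addn1 !shift ?subnDl //; lia.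
Qed.
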